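(* Let $(G,\oplus)$ be a gyrogroup and let $S\subseteq G\setminus\{e\}$ be symmetric such that $\mathrm{gyr}[g,g'](S)=S$ for all $g,g'\in G$. Then the R-Cayley graph $\mathrm{RCay}(G,S)$ is vertex-transitive.
   Context: A gyrogroup is a nonempty set $G$ with a binary operation $\oplus$ such that: (i) there is a unique $e\in G$ with $e\oplus x=x=x\oplus e$ for all $x$; (ii) each $x\in G$ has a unique inverse $\ominus x$ with $\ominus x\oplus x=e=x\oplus(\ominus x)$; (iii) for all $x,y\in G$ there is an automorphism $\mathrm{gyr}[x,y]$ of $(G,\oplus)$ with $x\oplus(y\oplus z)=(x\oplus y)\oplus \mathrm{gyr}[x,y](z)$ for all $z\in G$; (iv) $\mathrm{gyr}[x\oplus y,y]=\mathrm{gyr}[x,y]$ for all $x,y$. A subset $S\subseteq G$ is symmetric if $\ominus s\in S$ for every $s\in S$. For $S\subseteq G$ with $e\notin S$, the R-Cayley graph $\mathrm{RCay}(G,S)$ is the directed graph with vertex set $G$ and a directed edge $u\to v$ iff $v=u\oplus s$ for some $s\in S$. A (directed) graph is (vertex-)transitive if for any two vertices $u,v$ there is a graph automorphism (a bijection of vertices preserving directed edges in both directions) sending $u$ to $v$. *)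

Definition is_automorphism {G : Type} (op : G -> G -> G) (f : G -> G) : Prop :=
  (forall x y, f x = f y -> x = y) /\
  (forall y, exists x, f x = y) /\
  (forall x y, f (op x y) = op (f x) (f y)).

Record gyrogroup (G : Type) : Type := Gyrogroup {
  gop : G -> G -> G;
  ge : G;
  ginv : G -> G;
  gyr : G -> G -> G -> G;
  gop_e_l : forall x, gop ge x = x;
  gop_e_r : forall x, gop x ge = x;
  ge_unique : forall e', (forall x, gop e' x = x /\ gop x e' = x) -> e' = ge;
  ginv_l : forall x, gop (ginv x) x = ge;
  ginv_r : forall x, gop x (ginv x) = ge;
  ginv_unique : forall x y, gop y x = ge -> gop x y = ge -> y = ginv x;
  gyr_aut : forall x y, is_automorphism gop (gyr x y);
  gyr_assoc : forall x y z, gop x (gop y z) = gop (gop x y) (gyr x y z);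
  gyr_loop : forall x y, gyr (gop x y) y = gyr x y
}.

Arguments gop {G} _ _ _.
Arguments ge {G} _.
Arguments ginv {G} _ _.
Arguments gyr {G} _ _ _ _.

Definition rcay_edge {G : Type} (Gg : gyrogroup G) (S : G -> Prop) (u v : G) : Prop :=
  exists s, S s /\ v = gop Gg u s.

Definition graph_automorphism {V : Type} (E : V -> V -> Prop) (f : V -> V) : Prop :=
  (forall x y, f x = f y -> x = y) /\
  (forall y, exists x, f x = y) /\
  (forall u v, E u v <-> E (f u) (f v)).

Definition vertex_transitive {V : Type} (E : V -> V -> Prop) : Prop :=
  forall u v, exists f, graph_automorphism E f /\ f u = v.


(* The automorphisms we use are the left translations L_a : x |-> a (+) x.
   1. In any gyrogroup, (-a) (+) (a (+) z) = gyr[-a,a] z by left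
      gyroassociativity; since gyrations are bijective, this makes every
      left translation injective and surjective.
   2. Left gyroassociativity rewrites (a (+) u) (+) gyr[a,u] s = a (+) (u (+) s),
      so L_a maps the edge u -> u (+) s to an edge labelled gyr[a,u] s.  When
      every gyration maps S onto S, this shows L_a preserves and reflects
      the edges of RCay(G,S): it is a graph automorphism.
   3. Graph automorphisms compose, and L_v o L_(-u) sends u to v, since
      (-u) (+) u = e. *)

Section LeftTranslations.
Variable G : Type.
Variable Gg : gyrogroup G.

Local Notation "x (+) y" := (gop Gg x y) (at level 50, left associativity).
Local Notation "- x" := (ginv Gg x).

Lemma left_translate_inv (a z : G) : - a (+) (a (+) z) = gyr Gg (- a) a z.
Proof. rewrite gyr_assoc, ginv_l, gop_e_l. reflexivity. Qed.

Lemma left_cancel (a x y : G) : a (+) x = a (+) y -> x = y.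
Proof.
  intro Hxy.
  destruct (gyr_aut _ Gg (- a) a) as [gyr_inj _].
  apply gyr_inj. rewrite <- !left_translate_inv, Hxy. reflexivity.
Qed.

Lemma left_translate_surj (a y : G) : exists x, a (+) x = y.
Proof.
  destruct (gyr_aut _ Gg (- a) a) as [_ [gyr_surj _]].
  destruct (gyr_surj (- a (+) y)) as [x Hx].
  exists x. apply (left_cancel (- a)).
  rewrite left_translate_inv. exact Hx.
Qed.

Variable S : G -> Prop.

Hypothesis gyr_invariant :
  forall g g' y, (exists x, S x /\ y = gyr Gg g g' x) <-> S y.

Lemma left_translate_edge (a u v : G) :
  rcay_edge Gg S u v <-> rcay_edge Gg S (a (+) u) (a (+) v).
Proof.
  split.
  - intros [s [Hs ->]]. exists (gyr Gg a u s). split.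
    + apply (gyr_invariant a u). eauto.
    + apply gyr_assoc.
  - intros [t [Ht Hv]].
    apply (gyr_invariant a u) in Ht. destruct Ht as [s [Hs ->]].
    exists s. split; [exact Hs|].
    apply (left_cancel a). rewrite Hv, gyr_assoc. reflexivity.
Qed.

Lemma left_translate_automorphism (a : G) :
  graph_automorphism (rcay_edge Gg S) (gop Gg a).
Proof.
  split; [|split].
  - apply left_cancel.
  - apply left_translate_surj.
  - apply left_translate_edge.
Qed.

End LeftTranslations.

Lemma graph_automorphism_comp {V : Type} (E : V -> V -> Prop) (f g : V -> V) :
  graph_automorphism E f -> graph_automorphism E g ->
  graph_automorphism E (fun x => f (g x)).
Proof.
  intros [f_inj [f_surj f_edge]] [g_inj [g_surj g_edge]].
  split; [|split].
  - intros x y Hxy. apply g_inj, f_inj, Hxy.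
  - intro y. destruct (f_surj y) as [z Hz]. destruct (g_surj z) as [x Hx].
    exists x. rewrite Hx. exact Hz.
  - intros u v. split; intro Huv.
    + apply (proj1 (f_edge _ _)), (proj1 (g_edge _ _)), Huv.
    + apply (proj2 (g_edge _ _)), (proj2 (f_edge _ _)), Huv.
Qed.

Theorem mainTheorem4 (G : Type) (Gg : gyrogroup G) (S : G -> Prop)
  (HeS : ~ S (ge Gg))
  (Hsym : forall s, S s -> S (ginv Gg s))
  (Hgyr : forall g g' y, (exists x, S x /\ y = gyr Gg g g' x) <-> S y) :
  vertex_transitive (rcay_edge Gg S).
Proof.
  intros u v.
  exists (fun x => gop Gg v (gop Gg (ginv Gg u) x)). split.
  - apply graph_automorphism_comp; apply left_translate_automorphism; exact Hgyr.
  - rewrite ginv_l, gop_e_r. reflexivity.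
Qed.
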